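(* Let $R$ be a commutative noetherian ring and let $N$ be a spectral object of the category $R\text{-}Mod$ of $R$-modules. Let $M$ be a finitely generated $R$-module such that $\langle N\rangle\in Supp(M)$. Then $Hom_{R\text{-}Mod}(M,N)\neq 0$.
   Context: For an abelian category $\mathcal A$ and objects $X,Y$, write $X\prec Y$ if $X$ is a subquotient of a direct sum of finitely many copies of $Y$, and $X\approx Y$ if $X\prec Y\prec X$. $\langle X\rangle$ denotes the full subcategory of objects $Y$ with $X\not\prec Y$. A nonzero object $P$ is spectral if $Q\approx P$ for every nonzero subobject $Q\subseteq P$. For an object $M$, $Supp(M)=\{\langle P\rangle\mid P$ spectral, $P\prec M\}$. *)

(* R-modules are modeled as MathComp [lmodType R]. *)
From HB Require Import structures.
From mathcomp Require Import all_boot all_order all_algebra.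
Set Implicit Arguments. Unset Strict Implicit. Unset Printing Implicit Defensive.
Import GRing.Theory.
Local Open Scope ring_scope.

Definition is_ideal (R : comRingType) (I : R -> Prop) : Prop :=
  I 0 /\ (forall x y, I x -> I y -> I (x + y)) /\ (forall r x, I x -> I (r * x)).

Definition noetherian_ring (R : comRingType) : Prop :=
  forall I : R -> Prop, is_ideal I ->
    exists s : seq R, forall x, I x <->
      exists c : 'I_(size s) -> R, x = \sum_(i < size s) c i * s`_i.

Definition fin_gen_mod (R : comRingType) (M : lmodType R) : Prop :=
  exists s : seq M, forall m : M,
    exists c : 'I_(size s) -> R, m = \sum_(i < size s) c i *: s`_i.

Definition is_submod (R : comRingType) (M : lmodType R) (A : M -> Prop) : Prop :=
  A 0 /\ forall (a : R) u v, A u -> A v -> A (a *: u + v).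

Definition is_submod_pow (R : comRingType) (Y : lmodType R) (n : nat)
  (B : ('I_n -> Y) -> Prop) : Prop :=
  B (fun _ => 0) /\
  forall (a : R) u v, B u -> B v -> B (fun i => a *: u i + v i).

(* [subquot A C]: the submodule A of X is a subquotient of a finite direct sum
   of copies of the submodule C of Y: there are n, a submodule B of C^n
   (inside Y^n) and an R-linear map B -> A which is surjective onto A. *)
Definition subquot (R : comRingType) (X Y : lmodType R)
  (A : X -> Prop) (C : Y -> Prop) : Prop :=
  exists (n : nat) (B : ('I_n -> Y) -> Prop) (f : ('I_n -> Y) -> X),
    [/\ is_submod_pow B,
        (forall u, B u -> forall i, C (u i)),
        (forall (a : R) u v, B u -> B v ->
             f (fun i => a *: u i + v i) = a *: f u + f v),
        (forall u, B u -> A (f u)) &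
        (forall x, A x -> exists2 u, B u & f u = x)].

Definition prec (R : comRingType) (X Y : lmodType R) : Prop :=
  subquot (fun _ : X => True) (fun _ : Y => True).

Definition nonzero_mod (R : comRingType) (X : lmodType R) : Prop :=
  exists x : X, x != 0.

(* Spectral object: nonzero, and every nonzero subobject Q satisfies Q ≈ P. *)
Definition spectral (R : comRingType) (P : lmodType R) : Prop :=
  nonzero_mod P /\
  forall Q : P -> Prop, is_submod Q -> (exists2 q, Q q & q != 0) ->
    subquot Q (fun _ : P => True) /\ subquot (fun _ : P => True) Q.

(* Objects of the full subcategory <X>: those Y with ~ (X ≺ Y). *)
Definition in_angle (R : comRingType) (X Y : lmodType R) : Prop := ~ prec X Y.

(* <P> = <N> as full subcategories (same objects). *)
Definition angle_eq (R : comRingType) (P N : lmodType R) : Prop :=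
  forall Y : lmodType R, in_angle P Y <-> in_angle N Y.

Definition in_Supp (R : comRingType) (N M : lmodType R) : Prop :=
  exists P : lmodType R, [/\ spectral P, prec P M & angle_eq P N].

Definition hom_nonzero (R : comRingType) (M N : lmodType R) : Prop :=
  exists f : M -> N,
    (forall (a : R) u v, f (a *: u + v) = a *: f u + f v) /\
    exists m : M, f m != 0.

(* Only two consequences of the hypotheses are needed: N has a nonzero element x, and
   N ≺ P ≺ M for the spectral P with <P> = <N>, so every scalar annihilating M
   annihilates x.

   For M generated by s_1, ..., s_k with Ann(M) ⊆ Ann(x), take t maximal such
   that some t x k matrix C whose rows are relations among the s_j has a t x t
   minor d (on columns J) with d x <> 0; t = 0 works with d = 1. By Cramer's rule
   d kills s_j for j in J, so J misses some column j0, as otherwise d would kill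
   M and hence x. The functional v |-> det[v; C] on the columns j0, J vanishes,
   after multiplication by x, on relations by maximality of t, so it induces a
   linear map M -> N sending s_j0 to d x <> 0. *)

From mathcomp Require Import all_boot all_order all_algebra.
From mathcomp Require Import zify.
From Stdlib Require Import Classical FunctionalExtensionality.
Set Implicit Arguments. Unset Strict Implicit. Unset Printing Implicit Defensive.
Import GRing.Theory.
Local Open Scope ring_scope.

Section Annihilators.
Variable R : comNzRingType.

Definition annihilates (X : lmodType R) (r : R) : Prop := forall x : X, r *: x = 0.

Lemma prec_refl (X : lmodType R) : prec X X.
Proof.
exists 1%N, (fun _ => True), (fun u => u ord0); split => // x _.
by exists (fun _ => x).
Qed.

Lemma prec_annihilates (X Y : lmodType R) (r : R) :
  prec X Y -> annihilates Y r -> annihilates X r.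
Proof.
move=> [n [B [f [[B0 _] _ f_lin _ f_onto]]]] rY x.
have [u Bu <-] := f_onto x I.
have ru0 : (fun i => r *: u i + 0) = (fun _ => 0 : Y).
  by apply: functional_extensionality => i; rewrite rY addr0.
apply: (@addIr _ (f (fun _ => 0))).
by rewrite -f_lin // ru0 add0r.
Qed.

Lemma angle_eq_prec (P N : lmodType R) : angle_eq P N -> prec N P.
Proof. by move=> PN; apply: NNPP => /(PN P)[]; apply: prec_refl. Qed.

End Annihilators.

Section Determinants.
Variable R : comNzRingType.

Lemma det_colsub_inj m n (A : 'M[R]_(m, n)) (J : 'I_m -> 'I_n) :
  \det (colsub J A) != 0 -> injective J.
Proof.
move=> detA i1 i2 eqJ; apply: contraTeq detA => ne_i; rewrite negbK -det_tr.
by apply/eqP/(determinant_alternate ne_i) => j; rewrite !mxE eqJ.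
Qed.

Lemma det_scale_kernel (M : lmodType R) n (A : 'M[R]_n) (w : 'I_n -> M) :
  (forall l, \sum_i A l i *: w i = 0) -> forall i, \det A *: w i = 0.
Proof.
move=> Aw0 i.
have adjAw : \sum_l \adj A i l *: (\sum_j A l j *: w j) = 0.
  by apply: big1 => l _; rewrite Aw0 scaler0.
have adjA j : \sum_l \adj A i l * A l j = (\det A)%:M i j.
  by rewrite -mul_adj_mx mxE.
rewrite -{}adjAw; under eq_bigr do rewrite scaler_sumr.
rewrite exchange_big /=.
under eq_bigr => j _ do
  rewrite (eq_bigr _ (fun l _ => scalerA _ _ _)) -scaler_suml adjA mxE.
rewrite (bigD1 i) //= eqxx mulr1n big1 ?addr0 // => j ne_ji.
by rewrite eq_sym (negPf ne_ji) mulr0n scale0r.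
Qed.

Lemma colsub_col_mx m1 m2 n n' (g : 'I_n' -> 'I_n)
    (A : 'M[R]_(m1, n)) (B : 'M[R]_(m2, n)) :
  colsub g (col_mx A B) = col_mx (colsub g A) (colsub g B).
Proof. by apply/matrixP => i j; rewrite !mxE; case: split => ?; rewrite mxE. Qed.

Lemma row_col_mx_all m1 m2 n (P : 'rV[R]_n -> Prop)
    (A : 'M[R]_(m1, n)) (B : 'M[R]_(m2, n)) :
  (forall i, P (row i A)) -> (forall i, P (row i B)) -> forall i, P (row i (col_mx A B)).
Proof. by move=> PA PB i; case: (split_ordP i) => i' ->; rewrite ?rowKu ?rowKd. Qed.

Lemma row'_col_mx_top n m (u : 'rV[R]_m) (B : 'M[R]_(n, m)) :
  row' (lshift n ord0) (col_mx u B) = B.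
Proof.
apply/matrixP => i j; rewrite mxE.
have -> : lift (lshift n ord0) i = rshift 1 i by apply: val_inj.
exact: col_mxEd.
Qed.

Lemma det_col_mx_scalar n (B : 'M[R]_(n, 1 + n)) :
  scalar (fun u : 'rV[R]_(1 + n) => \det (col_mx u B)).
Proof.
move=> a u v /=; rewrite -[\det (col_mx v B)]mul1r.
apply: (@determinant_multilinear _ _ _ _ _ (lshift n ord0)); rewrite ?row'_col_mx_top //.
by rewrite !rowKu scale1r; apply/matrixP => i j; rewrite !mxE.
Qed.

Definition cons_ord t k (j0 : 'I_k) (J : 'I_t -> 'I_k) (l : 'I_(1 + t)) : 'I_k :=
  if split l is inr i then J i else j0.

Lemma det_colsub_cons_delta t k (C : 'M[R]_(t, k)) j0 (J : 'I_t -> 'I_k) :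
  j0 \notin codom J ->
  \det (colsub (cons_ord j0 J) (col_mx 'e_j0 C)) = \det (colsub J C).
Proof.
move=> j0J; have J_ne i : (J i == j0) = false.
  by apply/negbTE; apply: contraNneq j0J => <-; apply: codom_f.
have -> : colsub (cons_ord j0 J) (col_mx 'e_j0 C) = block_mx 1 0 (col j0 C) (colsub J C).
  apply/matrixP => i l; rewrite [LHS]mxE /cons_ord.
  case: (split_ordP i) => i' ->; case: (split_ordP l) => l' ->;
    by rewrite ?col_mxEu ?col_mxEd ?row_mxEl ?row_mxEr !mxE ?ord1 ?eqxx ?J_ne ?andbF.
by rewrite det_lblock det1 mul1r.
Qed.

End Determinants.

Lemma linear_factor_surj (R : comNzRingType) (V M N : lmodType R)
    (p : V -> M) (phi : V -> N) :
  linear p -> linear phi -> (forall m, exists v, p v = m) ->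
  (forall v, p v = 0 -> phi v = 0) ->
  exists2 f : M -> N, linear f & forall v, f (p v) = phi v.
Proof.
move=> p_lin phi_lin p_onto phi_ker.
have phi_eq v w : p v = p w -> phi v = phi w.
  move=> pvw; apply/eqP; rewrite -subr_eq0 -(zmod_morphism_linear phi_lin).
  by rewrite phi_ker // (zmod_morphism_linear p_lin) pvw subrr.
have p_onto_eq m : exists v, p v == m by have [v <-] := p_onto m; exists v.
pose sec m := xchoose (p_onto_eq m).
have secK : cancel sec p := fun m => eqP (xchooseP (p_onto_eq m)).
have fpK v : phi (sec (p v)) = phi v by apply: phi_eq; rewrite secK.
exists (phi \o sec) => [a u v|v] /=; last exact: fpK.
by rewrite -[u]secK -[v]secK -p_lin !fpK; apply: phi_lin.
Qed.

Section AnnihilatorHom.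
Variables (R : comNzRingType) (M N : lmodType R) (k : nat) (s : 'I_k -> M) (x : N).

Definition comb (v : 'rV[R]_k) : M := \sum_j v 0 j *: s j.

Hypothesis comb_onto : forall m : M, exists v, comb v = m.
Hypothesis ann_x : forall r, annihilates M r -> r *: x = 0.

Lemma comb_linear : linear comb.
Proof.
move=> a u v; rewrite /comb scaler_sumr -big_split; apply: eq_bigr => j _.
by rewrite !mxE scalerDl scalerA.
Qed.

Lemma comb_delta j0 : comb (delta_mx 0 j0) = s j0.
Proof.
rewrite /comb (bigD1 j0) //= mxE !eqxx scale1r big1 ?addr0 // => j ne_j.
by rewrite mxE (negPf ne_j) scale0r.
Qed.

Definition rel_minor (t : nat) : Prop :=
  exists (C : 'M[R]_(t, k)) (J : 'I_t -> 'I_k),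
    (forall l, comb (row l C) = 0) /\ \det (colsub J C) *: x != 0.

Lemma rel_minor0 : x != 0 -> rel_minor 0.
Proof.
move=> x_neq0; exists 0, (widen_ord (leq0n k)); split=> [[]//|].
by rewrite det_mx00 scale1r.
Qed.

Lemma minor_inj t (C : 'M[R]_(t, k)) (J : 'I_t -> 'I_k) :
  \det (colsub J C) *: x != 0 -> injective J.
Proof.
move=> detx; apply: (@det_colsub_inj _ _ _ C).
by apply: contra_neq detx => ->; rewrite scale0r.
Qed.

Lemma rel_minor_le t : rel_minor t -> (t <= k)%N.
Proof.
by move=> [C [J [_ /minor_inj J_inj]]]; have := leq_card J J_inj; rewrite !card_ord.
Qed.

Lemma rel_minor_not_onto t (C : 'M[R]_(t, k)) (J : 'I_t -> 'I_k) :
  (forall l, comb (row l C) = 0) -> \det (colsub J C) *: x != 0 ->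
  exists j0, j0 \notin codom J.
Proof.
move=> C_rel detx; have J_inj := minor_inj detx.
case: (pickP (fun j => j \notin codom J)) => [j0 j0J|J_onto]; first by exists j0.
have {}J_onto j : j \in codom J by move/negbT: (J_onto j); rewrite negbK.
have J_bij : bijective J.
  apply: (inj_card_bij J_inj); rewrite -(card_codom J_inj).
  by apply/subset_leq_card/subsetP => j _; apply: J_onto.
have det_s i : \det (colsub J C) *: s (J i) = 0.
  apply: (det_scale_kernel (w := s \o J)) => l; rewrite -[RHS](C_rel l) /comb.
  by rewrite (reindex J) /=; [apply: eq_bigr => j _; rewrite !mxE | exact: onW_bij].
suffices /ann_x detx0 : annihilates M (\det (colsub J C)) by rewrite detx0 eqxx in detx.
move=> m; have [v <-] := comb_onto m; rewrite /comb scaler_sumr; apply: big1 => j _.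
have /codomP[i ->] := J_onto j.
by rewrite scalerA mulrC -scalerA det_s scaler0.
Qed.

Lemma rel_minor_succ t : rel_minor t -> hom_nonzero M N \/ rel_minor t.+1.
Proof.
move=> [C [J [C_rel detx]]].
have [j0 j0J] := rel_minor_not_onto C_rel detx.
pose psi (v : 'rV[R]_k) := \det (colsub (cons_ord j0 J) (col_mx v C)).
have [[v v_rel psix]|psi_ker] := classic (exists2 v, comb v = 0 & psi v *: x != 0).
  right; exists (col_mx v C), (cons_ord j0 J); split=> //.
  by apply: (@row_col_mx_all _ 1 t _ (fun w => comb w = 0)) => // i; rewrite row_id.
have {}psi_ker v : comb v = 0 -> psi v *: x = 0.
  by move=> v_rel; apply: NNPP => /eqP psix; apply: psi_ker; exists v.
have psi_scalar : scalar psi.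
  by move=> a u v; rewrite /psi !colsub_col_mx linearP det_col_mx_scalar.
have phi_lin : linear (fun v => psi v *: x).
  by move=> a u v /=; rewrite psi_scalar scalerDl scalerA.
have [f f_lin f_comb] := linear_factor_surj comb_linear phi_lin comb_onto psi_ker.
left; exists f; split=> //; exists (s j0).
by rewrite -comb_delta f_comb /psi det_colsub_cons_delta.
Qed.

Lemma rel_minor_hom_nonzero t : rel_minor t -> hom_nonzero M N.
Proof.
move: {2}(k - t)%N (leqnn (k - t)) => n.
elim: n t => [|n IHn] t le_kt_n; case/rel_minor_succ => // mt1.
  by have := rel_minor_le mt1; lia.
by apply: (IHn t.+1) mt1; lia.
Qed.

End AnnihilatorHom.

Lemma hom_nonzero_of_annihilators (R : comNzRingType) (M N : lmodType R) (x : N) :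
  x != 0 -> fin_gen_mod M -> (forall r, annihilates M r -> r *: x = 0) ->
  hom_nonzero M N.
Proof.
move=> x_neq0 [s s_span] ann_x.
have comb_onto m : exists v, comb (fun j : 'I_(size s) => s`_j) v = m.
  by have [c ->] := s_span m; exists (\row_j c j); apply: eq_bigr => j _; rewrite mxE.
by apply: (rel_minor_hom_nonzero comb_onto ann_x); apply: rel_minor0.
Qed.

Theorem proposition4p1 (R : comRingType) (N M : lmodType R) :
  noetherian_ring R -> spectral N -> fin_gen_mod M -> in_Supp N M ->
  hom_nonzero M N.
Proof.
move=> _ [[x x_neq0] _] fgM [P [_ PM /angle_eq_prec NP]].
apply: (hom_nonzero_of_annihilators x_neq0 fgM) => r rM.
exact: (prec_annihilates NP (prec_annihilates PM rM)).
Qed.
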